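(* Let $(\Delta,\mathfrak o,m,q)$ be a quantized Brauer graph, $G$ a finite abelian group and $W:\mathcal Z_\Delta\to G$ a Brauer weighting. Then the canonical action of $G$ on $\Delta_W$ is a free Brauer action on the quantized Brauer covering graph $(\Delta_W,\mathfrak o_W,m_W,q_W)$; that is, it is a free Brauer action on $(\Delta_W,\mathfrak o_W,m_W)$ and, for every edge $i_g$ of $\Delta_W$ with endpoints $\mu_d,\nu_e$ not truncated at either endpoint, and every $h\in G$, $$\frac{q_W(i_g,\mu_d)}{q_W(i_g,\nu_e)}=\frac{q_W\big((i_g)^h,(\mu_d)^h\big)}{q_W\big((i_g)^h,(\nu_e)^h\big)}.$$
   Context: Brauer graphs. A Brauer graph $(\Gamma,\mathfrak o,m)$ is a finite connected graph $\Gamma$ (loops and multiple edges allowed) with vertex set $\Gamma_0$, edge set $\Gamma_1$ and at least one edge, together with a multiplicity function $m:\Gamma_0\to\mathbb Z_{\ge 1}$ and, for each vertex $\mu$, a cyclic ordering $\mathfrak o$ of the edges incident with $\mu$. A loop at $\mu$ occurs twice in the cyclic ordering at $\mu$; its two occurrences are regarded as two distinct elements of $\Gamma_1$ (each with its own successor). Edge $j$ is the successor of edge $i$ at $\mu$ if $j$ immediately follows $i$ in the cyclic ordering at $\mu$. The valency $\operatorname{val}(\mu)$ is the number of edges incident with $\mu$, loops counted twice; if $\operatorname{val}(\mu)=1$ the unique edge at $\mu$ is its own successor. An edge $i$ is truncated at its endpoint $\mu$ if $\operatorname{val}(\mu)=1$ and $m(\mu)=1$. Fix a field $K$. A quantized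 Brauer graph $(\Gamma,\mathfrak o,m,q)$ is a Brauer graph with a function $q:\mathcal X_\Gamma\to K\setminus\{0\}$, $(i,\mu)\mapsto q_{i,\mu}$, where $\mathcal X_\Gamma$ is the set of pairs $(i,\mu)$ with $\mu$ an endpoint of $i$ and $i$ not truncated at either of its endpoints. Brauer actions. Let $G$ be a finite abelian group. A Brauer action of $G$ on $(\Gamma,\mathfrak o,m)$ is a faithful action $x\mapsto x^g$ of $G$ on the graph $\Gamma$ (on vertices and edges, compatible with incidence) such that for all $g\in G$: if $j$ is the successor of $i$ at $\mu$ then $j^g$ is the successor of $i^g$ at $\mu^g$, and $m(\mu^g)=m(\mu)$. It is a free Brauer action if $G$ acts freely on $\Gamma_1$. Successor weightings. For a Brauer graph $(\Delta,\mathfrak o,m)$ and $\mu\in\Delta_0$ let $\mathcal Z_\mu$ be the set of pairs $(i,j)$ of edges with $j$ the successor of $i$ at $\mu$, and $\mathcal Z_\Delta=\bigsqcup_{\mu\in\Delta_0}\mathcal Z_\mu$ (disjoint union). A successor weighting is a function $W:\mathcal Z_\Delta\to G$. Put $\omega_\mu=\prod_{(i,j)\in\mathcal Z_\mu}W(i,j)$, let $\operatorname{ord}(\mu)$ be the order of $\omega_\mu$ in $G$, and $H_\mu=\langle\omega_\mu\rangle$. $W$ is a Brauer weighting if $\operatorname{ord}(\mu)$ divides $m(\mu)$ for all $\mu\in\Delta_0$. For each $\mu$, $\sim$ is the equivalence relation on the set of pairs $(i,H_\mu g)$ ($i$ incident with $\mu$, $g\in G$) generated by $(i,H_\mu g)\sim(j,H_\mu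 gW(i,j))$ whenever $j$ is the successor of $i$ at $\mu$; the class of $(i,H_\mu g)$ is $[i,H_\mu g]$, and $\mathcal D_\mu$ is the set of classes. Brauer covering graph. The graph $\Delta_W$ has vertices $\mu_d$ ($\mu\in\Delta_0$, $d\in\mathcal D_\mu$) and edges $i_g$ ($i\in\Delta_1$, $g\in G$). If $i$ has endpoints $\mu$ and $\nu$, then $i_g$ has endpoints $\mu_{[i,H_\mu g]}$ and $\nu_{[i,H_\nu g]}$; if $i$ is a loop at $\mu$ with its two occurrences $i,\hat i$, then $i_g$ has endpoints $\mu_{[i,H_\mu g]}$ and $\mu_{[\hat i,H_\mu g]}$. The cyclic ordering $\mathfrak o_W$ is defined by: if $j$ is the successor of $i$ at $\mu$, then $j_{gW(i,j)}$ is the successor of $i_g$ at $\mu_{[i,H_\mu g]}$. For a Brauer weighting, $m_W(\mu_d)=m(\mu)/\operatorname{ord}(\mu)$; $(\Delta_W,\mathfrak o_W,m_W)$ is the Brauer covering graph. Given a quantizing function $q$ on $\Delta$, $q_W(i_g,\mu_d)=q_{i,\mu}$, and $(\Delta_W,\mathfrak o_W,m_W,q_W)$ is the quantized Brauer covering graph. The canonical action of $G$ on $\Delta_W$ is $(\mu_{[i,H_\mu g]})^h=\mu_{[i,H_\mu gh]}$ and $(i_g)^h=i_{gh}$ for $h\in G$. *)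

From HB Require Import structures.
From mathcomp Require Import all_boot all_order all_algebra all_fingroup.
Set Implicit Arguments. Unset Strict Implicit. Unset Printing Implicit Defensive.

(* A graph has vertices V and edges E; each edge i has two ends         *)
(* (i,false) and (i,true) ("occurrences"/half-edges), with endpoints    *)
(* en i false, en i true.  A loop has both ends at the same vertex, so  *)
(* its two occurrences at that vertex are the two half-edges.           *)
(* The cyclic orderings are encoded by the successor map succ on        *)
(* half-edges: succ x is the successor of x at the vertex of x.         *)

Section BrauerGraph.
Variables (V E : finType) (en : E -> bool -> V).

Definition hvert (x : E * bool) : V := en x.1 x.2.

(* valency, loops counted twice *)
Definition valency (v : V) : nat := #|[set x : E * bool | hvert x == v]|.

Definition incident (i : E) (v : V) : bool := (en i false == v) || (en i true == v).

Definition adj : rel V := fun u v =>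
  [exists i : E, ((en i false == u) && (en i true == v))
              || ((en i true == u) && (en i false == v))].

Variable mult : V -> nat.

Definition truncated (i : E) (v : V) : bool :=
  [&& incident i v, valency v == 1 & mult v == 1].

Definition in_X (i : E) (v : V) : bool :=
  [&& incident i v, ~~ truncated i (en i false) & ~~ truncated i (en i true)].

Definition is_brauer_graph (succ : E * bool -> E * bool) : Prop :=
  [/\ injective succ,
      (forall x, hvert (succ x) = hvert x),
      (forall x y, hvert x = hvert y -> fconnect succ x y),
      (forall v, 0 < mult v) &
      (0 < #|E|) /\ (forall u v, connect adj u v)].

Definition quantizing (K : fieldType) (q : E -> V -> K) : Prop :=
  forall i v, in_X i v -> q i v != 0%R.

Definition is_brauer_action (succ : E * bool -> E * bool) (gT : finGroupType)
  (aV : V -> gT -> V) (aE : E -> gT -> E) (aH : E * bool -> gT -> E * bool) : Prop :=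
  ([/\ (forall v, aV v 1%g = v) /\ (forall v g h, aV v (g * h)%g = aV (aV v g) h),
      (forall i, aE i 1%g = i) /\ (forall i g h, aE i (g * h)%g = aE (aE i g) h),
      (forall x, aH x 1%g = x) /\ (forall x g h, aH x (g * h)%g = aH (aH x g) h) &
      (forall x g, (aH x g).1 = aE x.1 g)
        /\ (forall x g, aH (x.1, ~~ x.2) g = ((aH x g).1, ~~ (aH x g).2))
        /\ (forall x g, hvert (aH x g) = aV (hvert x) g)]) /\
  ([/\ (forall x g, succ (aH x g) = aH (succ x) g),
      (forall v g, mult (aV v g) = mult v) &
      (forall g, (forall v, aV v g = v) -> (forall i, aE i g = i) -> g = 1%g)]).

Definition is_free_brauer_action succ gT aV aE aH : Prop :=
  @is_brauer_action succ gT aV aE aH /\ (forall i g, aE i g = i -> g = 1%g).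

End BrauerGraph.

(* Z_Delta is indexed by half-edges: x <-> the pair (x, succ x).        *)

Section Covering.
Variables (V E : finType) (en : E -> bool -> V) (succ : E * bool -> E * bool).
Variables (gT : finGroupType) (W : E * bool -> gT).

Definition omega (v : V) : gT := \big[mulg/1%g]_(x | hvert en x == v) W x.
Definition ordv (v : V) : nat := #[omega v]%g.
Definition Hsub (v : V) : {set gT} := <[omega v]>%g.

Definition brauer_weighting (mult : V -> nat) : Prop :=
  forall v, ordv v %| mult v.

(* pairs (occurrence, coset) *)
Definition PT := ((E * bool) * {set gT})%type.
Definition stepW (p : PT) : PT := (succ p.1, (p.2 :* W p.1)%g).
Definition relW : rel PT := fun p r => (stepW p == r) || (stepW r == p).

Definition clsW (x : E * bool) (g : gT) : {set PT} :=
  [set p | connect relW (x, (Hsub (hvert en x) :* g)%g) p].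

Definition is_vertW (p : V * {set PT}) : bool :=
  [exists x, exists g, (hvert en x == p.1) && (p.2 == clsW x g)].

Definition VW := {p : V * {set PT} | is_vertW p}.

Lemma vertW_proof (x : E * bool) (g : gT) : is_vertW (hvert en x, clsW x g).
Proof. by apply/existsP; exists x; apply/existsP; exists g; rewrite !eqxx. Qed.

Definition vertW (x : E * bool) (g : gT) : VW := exist (fun p => is_vertW p) _ (vertW_proof x g).

Definition EW := (E * gT)%type.

Definition enW (e : EW) (b : bool) : VW := vertW (e.1, b) e.2.

(* successor: j_{g W(i,j)} is the successor of i_g *)
Definition succW (y : EW * bool) : EW * bool :=
  let x := (y.1.1, y.2) in (((succ x).1, (y.1.2 * W x)%g), (succ x).2).

Definition multW (mult : V -> nat) (v : VW) : nat :=
  mult (val v).1 %/ ordv (val v).1.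

Definition qW (K : fieldType) (q : E -> V -> K) (e : EW) (v : VW) : K :=
  q e.1 (val v).1.

Definition aEW (e : EW) (h : gT) : EW := (e.1, (e.2 * h)%g).
Definition aHW (y : EW * bool) (h : gT) : EW * bool := (aEW y.1 h, y.2).

End Covering.

From HB Require Import structures.
From mathcomp Require Import all_boot all_order all_algebra all_fingroup.
Set Implicit Arguments. Unset Strict Implicit. Unset Printing Implicit Defensive.

(* The vertices of Delta_W are classes [i, H_mu g] of the equivalence generated
   by the step (i, H_mu g) -> (succ i, H_mu g W(i, succ i)).  Right translation
   of the coset component by h in G commutes with this step as soon as G is
   abelian, so it maps classes to classes: [i, H_mu g] h = [i, H_mu g h].  This
   gives the action of G on vertices; on edges it is i_g |-> i_(g h), which is
   visibly free.  Finally q_W only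
   depends on the underlying edge and vertex of Delta, which the action does not
   change, so the quotients of quantizing values are invariant. *)

Lemma homo_connect (T U : finType) (e : rel T) (e' : rel U) (f : T -> U) :
  {homo f : x y / e x y >-> e' x y} ->
  {homo f : x y / connect e x y >-> connect e' x y}.
Proof.
move=> f_homo x _ /connectP [s s_path ->]; apply/connectP.
by exists (map f s); [exact: homo_path s_path | rewrite last_map].
Qed.

Section RightTranslation.
Variables (E : finType) (gT : finGroupType).

Definition transl (h : gT) (p : PT E gT) : PT E gT := (p.1, (p.2 :* h)%g).
Definition transl_set (h : gT) (S : {set PT E gT}) : {set PT E gT} :=
  transl h @: S.

Lemma transl1 : transl 1 =1 id.
Proof. by case=> x C; rewrite /transl rcoset1. Qed.

Lemma translM g h p : transl (g * h) p = transl h (transl g p).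
Proof. by case: p => x C; rewrite /transl /= rcosetM. Qed.

Lemma translK h : cancel (transl h) (transl h^-1).
Proof. by move=> p; rewrite -translM mulgV transl1. Qed.

Lemma translKV h : cancel (transl h^-1) (transl h).
Proof. by move=> p; rewrite -translM mulVg transl1. Qed.

Lemma transl_set1 S : transl_set 1 S = S.
Proof. by rewrite /transl_set (eq_imset _ transl1) imset_id. Qed.

Lemma transl_setM g h S : transl_set (g * h) S = transl_set h (transl_set g S).
Proof. by rewrite /transl_set -imset_comp; apply: eq_imset => p; apply: translM. Qed.

End RightTranslation.

Section CanonicalAction.
Variables (V E : finType) (en : E -> bool -> V) (succ : E * bool -> E * bool).
Variables (gT : finGroupType) (W : E * bool -> gT).
Hypothesis gT_comm : forall x y : gT, (x * y = y * x)%g.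

Local Notation stepW := (stepW succ W).
Local Notation relW := (relW succ W).
Local Notation clsW := (clsW en succ W).
Local Notation vertW := (vertW en succ W).
Local Notation VW := (VW en succ W).

Lemma stepW_transl h p : stepW (transl h p) = transl h (stepW p).
Proof. by case: p => x C; rewrite /stepW /transl /= -!rcosetM gT_comm. Qed.

Lemma connect_transl h :
  {homo transl h : p r / connect relW p r >-> connect relW p r}.
Proof.
apply: homo_connect => p r; rewrite /relW !stepW_transl.
by case/orP => /eqP <-; rewrite eqxx ?orbT.
Qed.

Lemma clsW_transl x g h : clsW x (g * h) = transl_set h (clsW x g).
Proof.
have start_transl : (x, (Hsub en W (hvert en x) :* (g * h))%g)
    = transl h (x, (Hsub en W (hvert en x) :* g)%g) by rewrite /transl rcosetM.
apply/setP => p; rewrite inE start_transl; apply/idP/imsetP.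
- move=> conn_p; exists (transl h^-1 p); last by rewrite translKV.
  by rewrite inE -(translK h (x, _)); apply: connect_transl.
- by case=> p0; rewrite inE => conn_p0 ->; apply: connect_transl.
Qed.

Lemma is_vertW_transl h p :
  is_vertW en succ W p -> is_vertW en succ W (p.1, transl_set h p.2).
Proof.
case/existsP => x /existsP [g /andP [/eqP vert_x /eqP cls_g]].
apply/existsP; exists x; apply/existsP; exists (g * h)%g.
by rewrite /= vert_x cls_g clsW_transl !eqxx.
Qed.

Definition aVW (v : VW) (h : gT) : VW := insubd v ((val v).1, transl_set h (val v).2).

Lemma val_aVW v h : val (aVW v h) = ((val v).1, transl_set h (val v).2).
Proof. by rewrite insubdK //; apply/is_vertW_transl/valP. Qed.

Lemma aVW_vert x g h : aVW (vertW x g) h = vertW x (g * h)%g.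
Proof. by apply: val_inj; rewrite val_aVW /= clsW_transl. Qed.

Lemma aVW1 v : aVW v 1%g = v.
Proof. by apply: val_inj; rewrite val_aVW transl_set1 -surjective_pairing. Qed.

Lemma aVWM v g h : aVW v (g * h)%g = aVW (aVW v g) h.
Proof. by apply: val_inj; rewrite !val_aVW transl_setM. Qed.

Lemma aEW_free (e : EW E gT) h : aEW e h = e -> h = 1%g.
Proof. by case: e => i g [] /eqP; rewrite -{2}(mulg1 g) (inj_eq (mulgI g)) => /eqP. Qed.

Lemma succW_aHW y h : succW succ W (aHW y h) = aHW (succW succ W y) h.
Proof. by case: y => [[i g] b]; rewrite /succW /aHW /aEW /= -!mulgA (gT_comm h). Qed.

Lemma hvert_aHW y h : hvert (enW en succ W) (aHW y h) = aVW (hvert (enW en succ W) y) h.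
Proof. by case: y => [[i g] b]; rewrite /hvert /enW /= aVW_vert. Qed.

Lemma multW_aVW mult v h : multW mult (aVW v h) = multW mult v.
Proof. by rewrite /multW val_aVW. Qed.

Lemma qW_aVW (K : fieldType) (q : E -> V -> K) e v h :
  @qW V E en succ gT W K q (aEW e h) (aVW v h) = @qW V E en succ gT W K q e v.
Proof. by rewrite /qW val_aVW. Qed.

(* The canonical action is a free Brauer action on (Delta_W, o_W, m_W), as soon
   as Delta has an edge (needed for faithfulness). *)
Lemma canonical_free_brauer_action mult : 0 < #|E| ->
  is_free_brauer_action (enW en succ W) (multW mult) (succW succ W)
    aVW (@aEW E gT) (@aHW E gT).
Proof.
case/card_gt0P => i0 _.
have aEW1 (e : EW E gT) : aEW e 1%g = e by case: e => i g; rewrite /aEW mulg1.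
have aEWM (e : EW E gT) g h : aEW e (g * h)%g = aEW (aEW e g) h.
  by case: e => i k; rewrite /aEW mulgA.
split; last exact: aEW_free.
split; split.
- by split; [exact: aVW1 | exact: aVWM].
- by split; [exact: aEW1 | exact: aEWM].
- by split=> [[e b]|[e b] g h]; rewrite /aHW /= ?aEW1 ?aEWM.
- by split; [| split; [| exact: hvert_aHW]].
- by move=> y h; rewrite succW_aHW.
- exact: multW_aVW.
- by move=> g _ /(_ (i0, 1%g)); apply: aEW_free.
Qed.

End CanonicalAction.

Theorem proposition4p4 (K : fieldType) (V E : finType) (en : E -> bool -> V)
  (succ : E * bool -> E * bool) (mult : V -> nat) (q : E -> V -> K)
  (gT : finGroupType) (W : E * bool -> gT) :
  is_brauer_graph en mult succ ->
  quantizing en mult q ->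
  abelian [set: gT] ->
  brauer_weighting en W mult ->
  exists aV : VW en succ W -> gT -> VW en succ W,
    (forall x g h, aV (vertW en succ W x g) h = vertW en succ W x (g * h)%g) /\
    is_free_brauer_action (enW en succ W) (@multW V E en succ gT W mult)
      (succW succ W) aV (@aEW E gT) (@aHW E gT) /\
    (forall (e : EW E gT) (h : gT),
       ~~ truncated (enW en succ W) (@multW V E en succ gT W mult) e (enW en succ W e false) ->
       ~~ truncated (enW en succ W) (@multW V E en succ gT W mult) e (enW en succ W e true) ->
       (@qW V E en succ gT W K q e (enW en succ W e false)
          / @qW V E en succ gT W K q e (enW en succ W e true))%R
       = (@qW V E en succ gT W K q (aEW e h) (aV (enW en succ W e false) h)
          / @qW V E en succ gT W K q (aEW e h) (aV (enW en succ W e true) h))%R).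
Proof.
move=> [_ _ _ _ [E_gt0 _]] _ gT_abelian _.
have gT_comm (x y : gT) : (x * y = y * x)%g.
  by apply: (centsP gT_abelian); rewrite inE.
exists (@aVW V E en succ gT W).
split; first exact: aVW_vert.
split; first exact: canonical_free_brauer_action.
by move=> e h _ _; rewrite !qW_aVW.
Qed.
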